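(* Fix an RWA-P instance (setting as in the context) and let $M=\max_{r\in R}\big(\max_{w\in W^r}B^r_w+\max_{p\in P^r}B^r_p\big)$. If $\alpha,\beta>0$ satisfy $$\frac{\beta}{\alpha}>|R|\,(M-2)+2,$$ then for every pair of feasible solutions $(\hat x,\hat y)$, $(\tilde x,\tilde y)$ with $f_\beta(\hat x)>f_\beta(\tilde x)$ we have $f(\hat x,\hat y)<f(\tilde x,\tilde y)$.
   Context: An RWA-P instance consists of: a directed graph $G=(V,E)$ (parallel arcs allowed), whose arcs are called links; a finite set $\Lambda$ of wavelengths; a finite set $R$ of requests, each request $r$ having a source node $s^r$ and a distinct destination node $t^r$; and for each $r\in R$ nonempty finite sets $W^r$ (working lightpaths) and $P^r$ (protection lightpaths). Each lightpath $\ell$ of request $r$ is a directed path in $G$ from $s^r$ to $t^r$ together with a wavelength $\Lambda[\ell]\in\Lambda$; $E[\ell]$ denotes its set of links and its length is $B^r_\ell=|E[\ell]|\ge1$. Conflict sets: $\mathcal C_1=\{(r,w,p): w\in W^r,p\in P^r, E[w]\cap E[p]\ne\emptyset\}$; $\mathcal C_2=\{(r_1,r_2,w,p): r_1\ne r_2, w\in W^{r_1}, p\in P^{r_2}, \Lambda[w]=\Lambda[p], E[w]\cap E[p]\neq\emptyset\}$; $\mathcal C_3=\{(r_1,r_2,w_1,w_2): w_1\in W^{r_1}, w_2\in W^{r_2}, (r_1,w_1)\ne(r_2,w_2), \Lambda[w_1]=\Lambda[w_2], E[w_1]\cap E[w_2]\ne\emptyset\}$; $\mathcal C_4$ analogously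 for pairs of distinct protection lightpaths. A solution is a pair of binary vectors $x=(x^r_w)$, $y=(y^r_p)$; it is feasible if $\sum_{w\in W^r}x^r_w=\sum_{p\in P^r}y^r_p$ and $\sum_{w\in W^r}x^r_w\le1$ for all $r$, and $x^r_w+y^r_p\le1$ for $(r,w,p)\in\mathcal C_1$, $x^{r_1}_w+y^{r_2}_p\le1$ on $\mathcal C_2$, $x^{r_1}_{w_1}+x^{r_2}_{w_2}\le1$ on $\mathcal C_3$, $y^{r_1}_{p_1}+y^{r_2}_{p_2}\le1$ on $\mathcal C_4$. Define $f_\alpha(x,y)=\sum_{r}\big(\sum_{w}B^r_wx^r_w+\sum_{p}B^r_py^r_p\big)$ (link usage), $f_\beta(x)=\sum_r\sum_w x^r_w$ (granted requests), and $f(x,y)=\alpha f_\alpha(x,y)-\beta f_\beta(x)$. *)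

From HB Require Import structures.
From mathcomp Require Import all_boot all_order all_algebra.
Set Implicit Arguments. Unset Strict Implicit. Unset Printing Implicit Defensive.
Import Order.TTheory GRing.Theory Num.Theory.

Section RWAP.
(* Network: nodes V, links (arcs, parallel arcs allowed) Lk with tail/head. *)
Variables (V Lk : finType) (tl hd : Lk -> V).

Definition is_dipath (s t : V) (a : seq Lk) : bool :=
  match a with
  | [::] => false
  | e0 :: rest =>
      [&& tl e0 == s, hd (last e0 rest) == t,
          path (fun e f => hd e == tl f) e0 rest
        & uniq (tl e0 :: map hd a)]
  end.

(* Wavelengths Lam, requests Req, lightpath identifiers Idx.
   W r / P r : working / protection lightpaths of request r;
   arcs r l / wl r l : link sequence and wavelength of lightpath l of r. *)
Variables (Lam Req Idx : finType) (src dst : Req -> V)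
  (W P : Req -> {set Idx}) (arcs : Req -> Idx -> seq Lk) (wl : Req -> Idx -> Lam).

Definition valid_instance : Prop :=
  [/\ forall r, src r != dst r,
      forall r, W r != set0,
      forall r, P r != set0
    & forall r l, l \in W r :|: P r -> is_dipath (src r) (dst r) (arcs r l)].

Definition Elp (r : Req) (l : Idx) : {set Lk} := [set e in arcs r l].
Definition B (r : Req) (l : Idx) : nat := #|Elp r l|.

Definition inter (r1 : Req) (l1 : Idx) (r2 : Req) (l2 : Idx) : bool :=
  Elp r1 l1 :&: Elp r2 l2 != set0.

(* Solutions: binary vectors x^r_w (w in W r), y^r_p (p in P r). *)
Definition conflicts_ok (x y : Req -> Idx -> bool) : Prop :=
  [/\ 
      (forall r w p, w \in W r -> p \in P r -> inter r w r p ->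
         x r w + y r p <= 1),
      (forall r1 r2 w p, r1 != r2 -> w \in W r1 -> p \in P r2 ->
         wl r1 w = wl r2 p -> inter r1 w r2 p -> x r1 w + y r2 p <= 1),
      (forall r1 r2 w1 w2, w1 \in W r1 -> w2 \in W r2 -> (r1, w1) != (r2, w2) ->
         wl r1 w1 = wl r2 w2 -> inter r1 w1 r2 w2 -> x r1 w1 + x r2 w2 <= 1)
    &
      (forall r1 r2 p1 p2, p1 \in P r1 -> p2 \in P r2 -> (r1, p1) != (r2, p2) ->
         wl r1 p1 = wl r2 p2 -> inter r1 p1 r2 p2 -> y r1 p1 + y r2 p2 <= 1)].

Definition feasible (x y : Req -> Idx -> bool) : Prop :=
  [/\ forall r, \sum_(w in W r) (x r w : nat) = \sum_(p in P r) (y r p : nat),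
      forall r, \sum_(w in W r) (x r w : nat) <= 1
    & conflicts_ok x y].

Definition f_alpha (x y : Req -> Idx -> bool) : nat :=
  \sum_r (\sum_(w in W r) B r w * x r w + \sum_(p in P r) B r p * y r p).

Definition f_beta (x : Req -> Idx -> bool) : nat :=
  \sum_r \sum_(w in W r) (x r w : nat).

Local Open Scope ring_scope.
Definition f_obj (K : numDomainType) (alpha beta : K) (x y : Req -> Idx -> bool) : K :=
  alpha * (f_alpha x y)%:R - beta * (f_beta x)%:R.

Definition Mmax : nat :=
  (\max_r (\max_(w in W r) B r w + \max_(p in P r) B r p))%N.

End RWAP.

From HB Require Import structures.
From mathcomp Require Import all_boot all_order all_algebra.
From mathcomp Require Import lra zify.
Import Order.TTheory GRing.Theory Num.Theory.

Set Implicit Arguments.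
Unset Strict Implicit.
Unset Printing Implicit Defensive.

(** Write [a] and [b] for the numbers of requests granted by the two
    solutions, so [b < a <= |R|].  Every granted request uses one working and
    one protection lightpath, each of length between [1] and its maximum, so
    the link usage of the first solution is at most [M a] and that of the
    second at least [2 b].  Since [a <= |R| <= |R| (a - b)], the usage gap is
    at most [M a - 2 b <= (|R| (M - 2) + 2) (a - b) < (beta / alpha) (a - b)]:
    the gain [beta (a - b)] in granted requests outweighs the extra link
    cost. *)

Section LinkUsageBounds.
Variables (V Lk Lam Req Idx : finType) (tl hd : Lk -> V) (src dst : Req -> V)
  (W P : Req -> {set Idx}) (arcs : Req -> Idx -> seq Lk) (wl : Req -> Idx -> Lam).

Lemma dipath_neq_nil s t a : is_dipath tl hd s t a -> a != [::].
Proof. by case: a. Qed.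

Lemma lightpath_length_gt0 r l :
  valid_instance tl hd src dst W P arcs -> l \in W r :|: P r -> 0 < B arcs r l.
Proof.
case=> _ _ _ dipath /dipath /dipath_neq_nil; rewrite /B /Elp.
by case: (arcs r l) => [|e s] // _; apply/card_gt0P; exists e; rewrite inE mem_head.
Qed.

Lemma f_beta_le_card x y : feasible W P arcs wl x y -> f_beta W x <= #|Req|.
Proof.
case=> _ at_most_one _; rewrite -[#|Req|]muln1 -sum_nat_const.
exact: leq_sum (fun r _ => at_most_one r).
Qed.

Lemma f_alpha_le_Mmax x y :
  feasible W P arcs wl x y -> f_alpha W P arcs x y <= Mmax W P arcs * f_beta W x.
Proof.
case=> balanced _ _; rewrite /f_alpha /f_beta big_distrr /=.
apply: leq_sum => r _.
have mWP_le : \max_(w in W r) B arcs r w + \max_(p in P r) B arcs r p <= Mmax W P arcs.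
  by rewrite /Mmax (bigD1 r) //= leq_maxl.
apply: leq_trans (leq_mul mWP_le (leqnn _)).
rewrite mulnDl {2}balanced !big_distrr /=.
by apply: leq_add; apply: leq_sum => l l_in; rewrite leq_mul // (bigD1 l) //= leq_maxl.
Qed.

Lemma f_alpha_ge_double x y :
  valid_instance tl hd src dst W P arcs -> feasible W P arcs wl x y ->
  2 * f_beta W x <= f_alpha W P arcs x y.
Proof.
move=> valid [balanced _ _]; rewrite /f_alpha /f_beta big_distrr /=.
apply: leq_sum => r _; rewrite mul2n -addnn {2}balanced.
by apply: leq_add; apply: leq_sum => l l_in;
  rewrite leq_pmull // (lightpath_length_gt0 valid) // inE l_in ?orbT.
Qed.

Lemma Mmax_ge2 x y :
  valid_instance tl hd src dst W P arcs -> feasible W P arcs wl x y ->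
  0 < f_beta W x -> 2 <= Mmax W P arcs.
Proof.
move=> valid feas granted.
rewrite -(leq_pmul2r granted).
exact: leq_trans (f_alpha_ge_double valid feas) (f_alpha_le_Mmax feas).
Qed.

End LinkUsageBounds.

Lemma usage_gap_bound n M a b : a <= n -> b < a -> 2 <= M ->
  M * a + (n * (M - 2) + 2) * b <= (n * (M - 2) + 2) * a + 2 * b.
Proof.
move=> a_le_n b_lt_a /subnK <-; rewrite addnK.
have : (M - 2) * a <= (M - 2) * n by rewrite leq_mul2l a_le_n orbT.
have : n * (M - 2) * b.+1 <= n * (M - 2) * a by rewrite leq_mul2l b_lt_a orbT.
nia.
Qed.

Local Open Scope ring_scope.

Lemma weighted_objective_lt (K : realFieldType) (alpha beta gamma A A' a b : K) :
  0 < alpha -> b < a -> gamma < beta / alpha -> A - A' <= gamma * (a - b) ->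
  alpha * A - beta * a < alpha * A' - beta * b.
Proof.
move=> alpha_gt0 b_lt_a gamma_lt gap.
have : gamma * (a - b) < beta / alpha * (a - b) by rewrite ltr_pM2r ?subr_gt0.
rewrite -(ltr_pM2l alpha_gt0).
have -> : alpha * (beta / alpha * (a - b)) = beta * (a - b).
  by rewrite mulrA mulrCA mulfV ?gt_eqF // mulr1.
have : alpha * (A - A') <= alpha * (gamma * (a - b)) by rewrite ler_pM2l.
lra.
Qed.

Theorem proposition2
  (V Lk : finType) (tl hd : Lk -> V)
  (Lam Req Idx : finType) (src dst : Req -> V)
  (W P : Req -> {set Idx}) (arcs : Req -> Idx -> seq Lk) (wl : Req -> Idx -> Lam)
  (K : realFieldType) (alpha beta : K) :
  valid_instance tl hd src dst W P arcs ->
  0 < alpha -> 0 < beta ->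
  beta / alpha > #|Req|%:R * ((Mmax W P arcs)%:R - 2) + 2 ->
  forall xh yh xt yt : Req -> Idx -> bool,
    feasible W P arcs wl xh yh -> feasible W P arcs wl xt yt ->
    (f_beta W xh > f_beta W xt)%N ->
    f_obj W P arcs alpha beta xh yh < f_obj W P arcs alpha beta xt yt.
Proof.
move=> valid alpha_gt0 _ ratio_gt xh yh xt yt feas_h feas_t more_granted.
have M_ge2 := Mmax_ge2 valid feas_h (leq_ltn_trans (leq0n _) more_granted).
have granted_lt : (f_beta W xt)%:R < (f_beta W xh)%:R :> K by rewrite ltr_nat.
apply: (weighted_objective_lt alpha_gt0 granted_lt ratio_gt).
have := usage_gap_bound (f_beta_le_card feas_h) more_granted M_ge2.
have := f_alpha_le_Mmax feas_h; have := f_alpha_ge_double valid feas_t.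
rewrite -!(ler_nat K) !(natrD, natrM) natrB //.
lra.
Qed.
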